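(* Let $p$ be a probability rule for quantum many-worlds theory satisfying Axioms (A1)–(A3). Then for every allowed state $v=\sum_n v_n\lvert n\rangle$ and every $n\ge0$, $p_n(v)=|v_n|^2$.
   Context: Quantum many-worlds theory is defined as follows. The worlds are the vectors $\lvert n\rangle$, $n\in\{0,1,2,\dots\}$, of a countably infinite orthonormal basis of a complex Hilbert space. The allowed states are the vectors $v=\sum_n v_n\lvert n\rangle$ with $\sum_n|v_n|^2=1$, where $v_n=\langle n\vert v\rangle$ is the amplitude of world $n$. The allowed transformations are all unitary operators $T$, with matrix elements $T_{ij}=\langle i\rvert T\lvert j\rangle$. A probability rule assigns to each allowed state $v$ a sequence $(p_n(v))_{n\ge 0}$ of nonnegative reals with $\sum_n p_n(v)=1$. The axioms are: (A1) Present state dependence: $p_n$ depends only on the present state $v$, so $p$ is a function of the state alone. (A2) Weak connection with amplitudes: for every allowed state $v$, $v_n=0$ implies $p_n(v)=0$. (A3) Weak connection with transformations: for every allowed state $v$ and allowed transformation $T$, and every partition of $\{0,1,2,\dots\}$ into subsets $\mathcal S_k$ such that $T_{ij}=0$ whenever $i$ and $j$ lie in different subsets, we have $\sum_{n\in\mathcal S_k}p_n(v)=\sum_{n\in\mathcal S_k}p_n(Tv)$ for every $k$. *)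

From Stdlib Require Import Reals.
From Coquelicot Require Import Coquelicot.
Open Scope R_scope.

(* Vectors of the Hilbert space are written in the world basis |n>, n : nat:
   v : nat -> C with v n = <n|v>. *)
Definition vec := nat -> C.

Definition l2 (v : vec) : Prop := ex_series (fun n => Cmod (v n) ^ 2).

Definition norm2 (v : vec) : R := Series (fun n => Cmod (v n) ^ 2).

Definition allowed_state (v : vec) : Prop := is_series (fun n => Cmod (v n) ^ 2) 1.

Definition ket (j : nat) : vec := fun n => if Nat.eqb n j then 1%C else 0%C.

(* unitary operators on l^2(N): linear, maps l^2 into l^2, norm-preserving
   (isometric) and onto l^2.  (Its values outside l^2 are irrelevant.) *)
Definition unitary (T : vec -> vec) : Prop :=
  (forall v, l2 v -> l2 (T v)) /\
  (forall (a : C) u v, l2 u -> l2 v ->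
     forall n, T (fun m => (a * u m + v m)%C) n = (a * T u n + T v n)%C) /\
  (forall v, l2 v -> norm2 (T v) = norm2 v) /\
  (forall w, l2 w -> exists v, l2 v /\ forall n, T v n = w n).

Definition mat_el (T : vec -> vec) (i j : nat) : C := T (ket j) i.

(* a probability rule: for each allowed state, a probability sequence on N.
   (A1, present-state dependence, is built in: p is a function of the state.) *)
Definition probability_rule (p : vec -> nat -> R) : Prop :=
  forall v, allowed_state v -> (forall n, 0 <= p v n) /\ is_series (p v) 1.

Definition axiom_A2 (p : vec -> nat -> R) : Prop :=
  forall v, allowed_state v -> forall n, v n = 0%C -> p v n = 0.

Definition block_sum (q : nat -> R) (blk : nat -> nat) (k : nat) : R :=
  Series (fun n => if Nat.eqb (blk n) k then q n else 0).

(* A partition of N into subsets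
   S_k is given by a block-labelling function blk : nat -> nat
   (S_k = {n | blk n = k}); every partition of N has countably many blocks,
   so this covers all partitions. *)
Definition axiom_A3 (p : vec -> nat -> R) : Prop :=
  forall v (T : vec -> vec) (blk : nat -> nat),
    allowed_state v -> unitary T ->
    (forall i j, blk i <> blk j -> mat_el T i j = 0%C) ->
    forall k, block_sum (p v) blk k = block_sum (p (T v)) blk k.

(* Fix a state v and two worlds i, j, and pick a third world k.  Two
   elementary moves are available:
   - merging world b into world a (merge_worlds): a 2x2 rotation on the worlds
     a, b sends the amplitudes (v_a, v_b) to (sqrt(|v_a|^2 + |v_b|^2), 0); it is
     block diagonal for the partition {a, b} + singletons, so by (A3) and (A2)
     world a inherits p_a + p_b and every other world keeps its probability;
   - moving the weight of a world onto another one (move_weight), by two merges.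
   On the states "tri x y z" (v outside {i, j, k}, weights x, y, z at i, j, k)
   these moves show that the probability of a world depends only on its weight,
   through a single function prob_i, which is additive and nonnegative on
   [0, |v_i|^2 + |v_j|^2 + |v_k|^2], hence linear (additive_linear).  So
   p_i(v) |v_j|^2 = p_j(v) |v_i|^2 (prob_ratio), and summing over j gives the
   theorem, since both p(v) and |v|^2 sum to 1. *)
From Stdlib Require Import Reals Lra Lia Arith FunctionalExtensionality.
From Coquelicot Require Import Coquelicot.
Open Scope R_scope.

Lemma is_series_zero : is_series (fun _ : nat => 0) 0.
Proof.
  unfold is_series. apply filterlim_ext with (fun _ => 0); [|apply filterlim_const].
  intros n. induction n as [|n IH]; [now rewrite sum_O|].
  rewrite sum_Sn, <- IH. change (0 = 0 + 0). ring.
Qed.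

Lemma is_series_single (d : nat -> R) (a : nat) :
  (forall n, n <> a -> d n = 0) -> is_series d (d a).
Proof.
  revert d. induction a as [|a IH]; intros d Hd; apply is_series_decr_1.
  - match goal with |- is_series _ ?l =>
      replace l with 0 by (change (0 = d 0%nat + - d 0%nat); ring) end.
    apply is_series_ext with (2 := is_series_zero).
    intros n. symmetry. apply Hd. lia.
  - match goal with |- is_series _ ?l =>
      replace l with (d (S a)) by (rewrite (Hd 0%nat) by lia; change (d (S a) = d (S a) + - 0); ring) end.
    apply (IH (fun k => d (S k))). intros n Hn. apply Hd. lia.
Qed.

Lemma is_series_change1 (f g : nat -> R) (a : nat) (l : R) :
  (forall n, n <> a -> g n = f n) -> is_series f l -> is_series g (l - f a + g a).
Proof.
  intros Hg Hf.
  set (d := fun n => if Nat.eqb n a then g a - f a else 0).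
  assert (Hd : is_series d (g a - f a)).
  { replace (g a - f a) with (d a) by (unfold d; now rewrite Nat.eqb_refl).
    apply is_series_single. intros n Hn. unfold d. now rewrite (proj2 (Nat.eqb_neq n a) Hn). }
  replace (l - f a + g a) with (plus l (g a - f a)) by (change (l + (g a - f a) = l - f a + g a); ring).
  apply is_series_ext with (2 := is_series_plus _ _ _ _ Hf Hd).
  intros n. change (f n + d n = g n). unfold d.
  destruct (Nat.eqb_spec n a) as [->|Hn]; [ring|rewrite Hg by exact Hn; ring].
Qed.

Definition upd (v : vec) (a : nat) (z : C) : vec :=
  fun n => if Nat.eqb n a then z else v n.

Lemma upd_same v a z : upd v a z a = z.
Proof. unfold upd. now rewrite Nat.eqb_refl. Qed.

Lemma upd_other v a z n : n <> a -> upd v a z n = v n.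
Proof. intros Hn. unfold upd. now rewrite (proj2 (Nat.eqb_neq n a) Hn). Qed.

Lemma is_series_upd (v : vec) a z l :
  is_series (fun n => Cmod (v n) ^ 2) l ->
  is_series (fun n => Cmod (upd v a z n) ^ 2) (l - Cmod (v a) ^ 2 + Cmod z ^ 2).
Proof.
  intros Hv. replace (Cmod z) with (Cmod (upd v a z a)) by now rewrite upd_same.
  apply (is_series_change1 (fun n => Cmod (v n) ^ 2) (fun n => Cmod (upd v a z n) ^ 2)); auto.
  intros n Hn. now rewrite upd_other.
Qed.

Section AdditiveFunctions.
Variables (f : R -> R) (s : R).
Hypothesis f_additive : forall x y, 0 <= x -> 0 <= y -> x + y <= s -> f x + f y = f (x + y).
Hypothesis f_nonneg : forall x, 0 <= x -> x <= s -> 0 <= f x.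

Lemma additive_monotone x y : 0 <= x -> x <= y -> y <= s -> f x <= f y.
Proof.
  intros Hx Hxy Hy. rewrite <- (Rplus_minus x y), <- f_additive by lra.
  pose proof (f_nonneg (y - x)). lra.
Qed.

Lemma additive_zero : 0 <= s -> f 0 = 0.
Proof. intros Hs. pose proof (f_additive 0 0) as H0. rewrite Rplus_0_r in H0. lra. Qed.

Lemma additive_nat_mult t m : 0 <= t -> INR m * t <= s -> f (INR m * t) = INR m * f t.
Proof.
  intros Ht. induction m as [|m IH]; intros Hm.
  - simpl in *. rewrite !Rmult_0_l in *. now apply additive_zero.
  - rewrite S_INR in *. assert (0 <= INR m * t) by (apply Rmult_le_pos; [apply pos_INR|lra]).
    replace ((INR m + 1) * t) with (INR m * t + t) by ring.
    rewrite <- f_additive, IH by lra. ring.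
Qed.

(* Approximating x by multiples of y / N pins down f x * y - f y * x up to
   f y * y / N. *)
Lemma additive_ratio_bound x y (N : nat) : 0 <= x -> 0 < y -> x + y <= s -> (0 < N)%nat ->
  Rabs (f x * y - f y * x) * INR N <= f y * y.
Proof.
  intros Hx Hy Hxy HN. assert (HNr : 1 <= INR N) by (apply (le_INR 1); lia).
  set (t := y / INR N).
  assert (Ht : 0 < t) by (unfold t; apply Rdiv_lt_0_compat; lra).
  assert (HNt : y = INR N * t) by (unfold t; field; lra).
  destruct (nfloor_ex (x / t)) as [m [Hm1 Hm2]]; [apply Rdiv_le_0_compat; lra|].
  assert (Hlow : INR m * t <= x).
  { apply (Rmult_le_compat_r t) in Hm1; [|lra]. now replace (x / t * t) with x in Hm1 by (field; lra). }
  assert (Hhigh : x < (INR m + 1) * t).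
  { apply (Rmult_lt_compat_r t) in Hm2; [|lra]. now replace (x / t * t) with x in Hm2 by (field; lra). }
  assert (Hm0 : 0 <= INR m) by apply pos_INR.
  assert (Hft : 0 <= f t) by (apply f_nonneg; nra).
  assert (Efy : f y = INR N * f t) by (rewrite HNt; apply additive_nat_mult; lra).
  assert (Flow : INR m * f t <= f x).
  { rewrite <- additive_nat_mult by nra. apply additive_monotone; nra. }
  assert (Fhigh : f x <= (INR m + 1) * f t).
  { rewrite <- S_INR, <- additive_nat_mult by (rewrite ?S_INR; nra).
    apply additive_monotone; rewrite ?S_INR; nra. }
  rewrite Efy, HNt.
  assert (Hbound : Rabs (f x * (INR N * t) - INR N * f t * x) <= INR N * f t * t).
  { assert (HNt0 : 0 <= INR N * t) by nra.
    assert (HNf0 : 0 <= INR N * f t) by nra.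
    pose proof (Rmult_le_compat_r _ _ _ HNt0 Flow).
    pose proof (Rmult_le_compat_r _ _ _ HNt0 Fhigh).
    pose proof (Rmult_le_compat_l _ _ _ HNf0 Hlow).
    pose proof (Rmult_le_compat_l _ _ _ HNf0 (Rlt_le _ _ Hhigh)).
    apply Rabs_le. split; lra. }
  nra.
Qed.

Lemma additive_linear x y : 0 <= x -> 0 <= y -> x + y <= s -> f x * y = f y * x.
Proof.
  intros Hx Hy Hxy.
  destruct (Req_dec y 0) as [->|Hy0].
  { rewrite additive_zero by lra. ring. }
  set (D := f x * y - f y * x).
  destruct (Req_dec D 0) as [HD|HD]; [unfold D in HD; lra|].
  destruct (INR_archimed (Rabs D) (f y * y)) as [N HN]; [now apply Rabs_pos_lt|].
  destruct N as [|N]; [simpl in HN; pose proof (f_nonneg y); nra|].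
  pose proof (additive_ratio_bound x y (S N) Hx ltac:(lra) Hxy ltac:(lia)) as Hb.
  fold D in Hb. lra.
Qed.
End AdditiveFunctions.

(* Rotations of C^2: (al, be) with |al|^2 + |be|^2 = 1 defines the special
   unitary matrix [[conj al, conj be], [- be, al]]. *)
Lemma Cmod_sq (z : C) : Cmod z ^ 2 = fst z ^ 2 + snd z ^ 2.
Proof. unfold Cmod. rewrite pow2_sqrt; [reflexivity|nra]. Qed.

Lemma Cmod_sqrt_sq (x : R) : 0 <= x -> Cmod (RtoC (sqrt x)) ^ 2 = x.
Proof. intros Hx. rewrite Cmod_R, Rabs_pos_eq by apply sqrt_pos. now apply pow2_sqrt. Qed.

Lemma sqrt0_amplitude : RtoC (sqrt 0) = 0%C.
Proof. now rewrite sqrt_0. Qed.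

Definition rot2 (al be x y : C) : C * C :=
  ((Cconj al * x + Cconj be * y)%C, (- be * x + al * y)%C).

Lemma rot2_norm al be x y : Cmod al ^ 2 + Cmod be ^ 2 = 1 ->
  Cmod (fst (rot2 al be x y)) ^ 2 + Cmod (snd (rot2 al be x y)) ^ 2 = Cmod x ^ 2 + Cmod y ^ 2.
Proof.
  intros H. rewrite !Cmod_sq in *.
  destruct al as [a1 a2], be as [b1 b2], x as [x1 x2], y as [y1 y2]; cbn [fst snd] in *.
  unfold rot2, Cmult, Cplus, Copp, Cconj; cbn [fst snd].
  transitivity ((a1 ^ 2 + a2 ^ 2 + (b1 ^ 2 + b2 ^ 2)) * (x1 ^ 2 + x2 ^ 2 + (y1 ^ 2 + y2 ^ 2))).
  - ring.
  - rewrite H. ring.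
Qed.

Lemma rot2_inverse al be x y : Cmod al ^ 2 + Cmod be ^ 2 = 1 ->
  let u := rot2 (Cconj al) (- be) x y in rot2 al be (fst u) (snd u) = (x, y).
Proof.
  intros H. rewrite !Cmod_sq in H.
  destruct al as [a1 a2], be as [b1 b2], x as [x1 x2], y as [y1 y2]; cbn [fst snd] in *.
  unfold rot2, Cmult, Cplus, Copp, Cconj; cbn [fst snd].
  f_equal; f_equal; match goal with |- _ = ?t =>
    transitivity ((a1 ^ 2 + a2 ^ 2 + (b1 ^ 2 + b2 ^ 2)) * t); [ring | rewrite H; ring] end.
Qed.

Lemma rot2_to_axis (x y : C) : exists al be,
  Cmod al ^ 2 + Cmod be ^ 2 = 1 /\ rot2 al be x y = (RtoC (sqrt (Cmod x ^ 2 + Cmod y ^ 2)), RtoC 0).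
Proof.
  set (r := sqrt (Cmod x ^ 2 + Cmod y ^ 2)).
  assert (Hr2 : r ^ 2 = Cmod x ^ 2 + Cmod y ^ 2) by (apply pow2_sqrt; nra).
  destruct (Req_dec r 0) as [Hr0|Hr0].
  - exists 1%C, 0%C. rewrite Hr0. split.
    + rewrite Cmod_1, Cmod_0. ring.
    + assert (Hx : x = 0%C) by (apply Cmod_eq_0; nra).
      assert (Hy : y = 0%C) by (apply Cmod_eq_0; nra).
      rewrite Hx, Hy. unfold rot2. f_equal; ring.
  - exists (@pair R R (fst x / r) (snd x / r)), (@pair R R (fst y / r) (snd y / r)).
    rewrite !Cmod_sq in *. destruct x as [x1 x2], y as [y1 y2]; cbn [fst snd] in *. split.
    + apply (Rmult_eq_reg_l (r ^ 2)); [|now apply pow_nonzero].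
      field_simplify; [|exact Hr0]. rewrite Hr2. field.
    + unfold rot2, Cmult, Cplus, Copp, Cconj, RtoC; cbn [fst snd]. f_equal; f_equal.
      * apply (Rmult_eq_reg_l r); [|exact Hr0]. field_simplify; [|exact Hr0].
        rewrite Hr2. ring.
      * field. exact Hr0.
      * field. exact Hr0.
      * field. exact Hr0.
Qed.

Definition rot_op (a b : nat) (al be : C) (u : vec) : vec :=
  upd (upd u b (snd (rot2 al be (u a) (u b)))) a (fst (rot2 al be (u a) (u b))).

Section Rotation.
Variables (a b : nat) (al be : C).
Hypothesis Hab : a <> b.
Hypothesis Hunit : Cmod al ^ 2 + Cmod be ^ 2 = 1.

Lemma rot_op_a u : rot_op a b al be u a = fst (rot2 al be (u a) (u b)).
Proof. apply upd_same. Qed.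

Lemma rot_op_b u : rot_op a b al be u b = snd (rot2 al be (u a) (u b)).
Proof. unfold rot_op. rewrite upd_other by auto. apply upd_same. Qed.

Lemma rot_op_other u n : n <> a -> n <> b -> rot_op a b al be u n = u n.
Proof. intros Ha Hb. unfold rot_op. now rewrite !upd_other. Qed.

Lemma is_series_rot_op u l :
  is_series (fun n => Cmod (u n) ^ 2) l -> is_series (fun n => Cmod (rot_op a b al be u n) ^ 2) l.
Proof.
  intros Hu. pose proof (is_series_upd _ a (fst (rot2 al be (u a) (u b)))
    _ (is_series_upd u b (snd (rot2 al be (u a) (u b))) l Hu)) as H.
  rewrite upd_other in H by auto.
  pose proof (rot2_norm al be (u a) (u b) Hunit).
  match type of H with is_series _ ?m => replace m with l in H by lra end.
  exact H.
Qed.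
End Rotation.

(* The rotation by a unit vector (al, be) of C^2 acting on the worlds a, b
   is a unitary operator; its inverse is the rotation by (conj al, - be). *)
Lemma rot_op_unitary a b al be : a <> b -> Cmod al ^ 2 + Cmod be ^ 2 = 1 ->
  unitary (rot_op a b al be).
Proof.
  intros Hab Hunit.
  assert (Hunit' : Cmod (Cconj al) ^ 2 + Cmod (- be) ^ 2 = 1) by now rewrite Cmod_conj, Cmod_opp.
  split; [|split; [|split]].
  - intros u [l Hl]. exists l. now apply is_series_rot_op.
  - intros c u v _ _ n. unfold rot_op, upd, rot2. cbn [fst snd].
    destruct (Nat.eqb n a); [|destruct (Nat.eqb n b)]; [ring|ring|reflexivity].
  - intros u [l Hl]. unfold norm2.
    now rewrite (is_series_unique _ _ Hl), (is_series_unique _ _ (is_series_rot_op a b al be Hab Hunit u l Hl)).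
  - intros w [l Hl]. set (u := rot_op a b (Cconj al) (- be) w). exists u. split.
    + exists l. now apply is_series_rot_op.
    + pose proof (rot2_inverse al be (w a) (w b) Hunit) as Hinv. cbv zeta in Hinv.
      assert (Hua : u a = fst (rot2 (Cconj al) (- be) (w a) (w b))) by apply rot_op_a.
      assert (Hub : u b = snd (rot2 (Cconj al) (- be) (w a) (w b))) by now apply rot_op_b.
      intros n. destruct (Nat.eq_dec n a) as [->|Hna]; [|destruct (Nat.eq_dec n b) as [->|Hnb]].
      * now rewrite rot_op_a, Hua, Hub, Hinv.
      * now rewrite rot_op_b, Hua, Hub, Hinv.
      * unfold u. now rewrite !rot_op_other.
Qed.

Lemma unitary_allowed T v : unitary T -> allowed_state v -> allowed_state (T v).
Proof.
  intros [Hl2 [_ [Hnorm _]]] Hv.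
  assert (Hv2 : l2 v) by (exists 1; exact Hv).
  destruct (Hl2 v Hv2) as [l Hl].
  assert (E : l = 1).
  { rewrite <- (is_series_unique _ _ Hl), <- (is_series_unique _ _ Hv). now apply Hnorm. }
  unfold allowed_state. now rewrite <- E.
Qed.

Definition pair_blocks (a b : nat) : nat -> nat :=
  fun n => if Nat.eqb n a then 0%nat else if Nat.eqb n b then 0%nat else S n.

Lemma block_sum_pair q a b : a <> b -> block_sum q (pair_blocks a b) 0 = q a + q b.
Proof.
  intros Hab. unfold block_sum. apply is_series_unique.
  set (da := fun n => if Nat.eqb n a then q a else 0).
  set (db := fun n => if Nat.eqb n b then q b else 0).
  assert (Ha : is_series da (q a)).
  { replace (q a) with (da a) by (unfold da; now rewrite Nat.eqb_refl).
    apply is_series_single. intros n Hn. unfold da. now rewrite (proj2 (Nat.eqb_neq n a) Hn). }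
  assert (Hb : is_series db (q b)).
  { replace (q b) with (db b) by (unfold db; now rewrite Nat.eqb_refl).
    apply is_series_single. intros n Hn. unfold db. now rewrite (proj2 (Nat.eqb_neq n b) Hn). }
  apply is_series_ext with (2 := is_series_plus _ _ _ _ Ha Hb).
  intros n. change (da n + db n = if Nat.eqb (pair_blocks a b n) 0 then q n else 0).
  unfold da, db, pair_blocks.
  destruct (Nat.eqb_spec n a) as [->|Hna]; [|destruct (Nat.eqb_spec n b) as [->|Hnb]].
  - rewrite (proj2 (Nat.eqb_neq a b) Hab). simpl. ring.
  - simpl. ring.
  - simpl. ring.
Qed.

Lemma block_sum_single q a b c : c <> a -> c <> b -> block_sum q (pair_blocks a b) (S c) = q c.
Proof.
  intros Hca Hcb. unfold block_sum.
  set (g := fun n => if Nat.eqb (pair_blocks a b n) (S c) then q n else 0).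
  replace (q c) with (g c).
  - apply is_series_unique, is_series_single. intros n Hn. unfold g, pair_blocks.
    destruct (Nat.eqb n a); [reflexivity|]. destruct (Nat.eqb n b); [reflexivity|].
    simpl. now rewrite (proj2 (Nat.eqb_neq n c) Hn).
  - unfold g, pair_blocks. rewrite (proj2 (Nat.eqb_neq c a) Hca), (proj2 (Nat.eqb_neq c b) Hcb).
    simpl. now rewrite Nat.eqb_refl.
Qed.

Lemma rot_op_block_diagonal a b al be i j :
  pair_blocks a b i <> pair_blocks a b j -> mat_el (rot_op a b al be) i j = 0%C.
Proof.
  intros Hij. unfold mat_el, pair_blocks in *.
  assert (Hket : forall n m, n <> m -> ket m n = 0%C).
  { intros n m Hnm. unfold ket. now rewrite (proj2 (Nat.eqb_neq n m) Hnm). }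
  destruct (Nat.eqb_spec i a) as [->|Hia]; [|destruct (Nat.eqb_spec i b) as [->|Hib]].
  - destruct (Nat.eqb_spec j a); [easy|]. destruct (Nat.eqb_spec j b); [easy|].
    rewrite rot_op_a, !Hket by auto. unfold rot2. cbn [fst]. ring.
  - destruct (Nat.eqb_spec j a); [easy|]. destruct (Nat.eqb_spec j b); [easy|].
    rewrite rot_op_b, !Hket by auto. unfold rot2. cbn [snd]. ring.
  - rewrite rot_op_other by auto. apply Hket. intros E. subst j.
    rewrite (proj2 (Nat.eqb_neq i a) Hia), (proj2 (Nat.eqb_neq i b) Hib) in Hij. now apply Hij.
Qed.

Section ProbabilityRule.
Variable p : vec -> nat -> R.
Hypothesis HA2 : axiom_A2 p.
Hypothesis HA3 : axiom_A3 p.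

(* A rotation on {a, b} turns w into w', so by (A3) the probability of a in w'
   is the total probability of a and b in w, and every other world keeps its
   probability. *)
Lemma merge_worlds (w w' : vec) (a b : nat) : allowed_state w -> a <> b ->
  w' a = RtoC (sqrt (Cmod (w a) ^ 2 + Cmod (w b) ^ 2)) -> w' b = 0%C ->
  (forall c, c <> a -> c <> b -> w' c = w c) ->
  allowed_state w' /\ p w' a = p w a + p w b /\
  (forall c, c <> a -> c <> b -> p w' c = p w c).
Proof.
  intros Hw Hab Hw'a Hw'b Hw'c.
  destruct (rot2_to_axis (w a) (w b)) as [al [be [Hunit Hrot]]].
  pose proof (rot_op_unitary a b al be Hab Hunit) as HT.
  assert (HTw : rot_op a b al be w = w').
  { apply functional_extensionality. intros n.
    destruct (Nat.eq_dec n a) as [->|Hna]; [|destruct (Nat.eq_dec n b) as [->|Hnb]].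
    - now rewrite rot_op_a, Hrot, Hw'a.
    - now rewrite rot_op_b, Hrot, Hw'b.
    - rewrite rot_op_other, Hw'c; auto. }
  assert (Hw' : allowed_state w') by (rewrite <- HTw; now apply unitary_allowed).
  pose proof (HA3 w _ (pair_blocks a b) Hw HT (rot_op_block_diagonal a b al be)) as Hblocks.
  rewrite HTw in Hblocks.
  assert (Hp'b : p w' b = 0) by (now apply HA2).
  split; [exact Hw'|split].
  - pose proof (Hblocks 0%nat) as H0. rewrite !block_sum_pair in H0 by exact Hab. lra.
  - intros c Hca Hcb. pose proof (Hblocks (S c)) as Hc.
    now rewrite !block_sum_single in Hc.
Qed.

(* Moving the weight of world a onto world b (whose own weight is first merged
   into a third world c) does not change its probability. *)
Lemma move_weight (w w' : vec) (a b c : nat) :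
  allowed_state w -> a <> b -> b <> c -> a <> c ->
  w' a = 0%C -> w' b = RtoC (sqrt (Cmod (w a) ^ 2)) ->
  w' c = RtoC (sqrt (Cmod (w c) ^ 2 + Cmod (w b) ^ 2)) ->
  (forall n, n <> a -> n <> b -> n <> c -> w' n = w n) ->
  p w' b = p w a.
Proof.
  intros Hw Hab Hbc Hac Hw'a Hw'b Hw'c Hw'n.
  set (w1 := upd (upd w b 0%C) c (RtoC (sqrt (Cmod (w c) ^ 2 + Cmod (w b) ^ 2)))).
  assert (Hw1a : w1 a = w a) by (unfold w1; now rewrite !upd_other).
  assert (Hw1b : w1 b = 0%C) by (unfold w1; now rewrite upd_other, upd_same).
  destruct (merge_worlds w w1 c b) as [Hw1 [_ Hw1_other]]; auto.
  - apply upd_same.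
  - intros n Hnc Hnb. unfold w1. now rewrite !upd_other.
  - destruct (merge_worlds w1 w' b a) as [_ [Hmerge _]]; auto.
    + rewrite Hw'b, Hw1a, Hw1b, Cmod_0. do 2 f_equal. ring.
    + intros n Hnb Hna. destruct (Nat.eq_dec n c) as [->|Hnc].
      * unfold w1. now rewrite upd_same.
      * rewrite Hw'n by auto. unfold w1. now rewrite !upd_other.
    + rewrite Hmerge, (HA2 w1 Hw1 b Hw1b), Hw1_other by auto. ring.
Qed.

Section ThreeWorlds.
Hypothesis Hp : probability_rule p.
Variables (v : vec) (i j k : nat).
Hypothesis Hv : allowed_state v.
Hypotheses (Hij : i <> j) (Hjk : j <> k) (Hik : i <> k).

Definition mass : R := Cmod (v i) ^ 2 + Cmod (v j) ^ 2 + Cmod (v k) ^ 2.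

Definition tri (x y z : R) : vec :=
  upd (upd (upd v k (RtoC (sqrt z))) j (RtoC (sqrt y))) i (RtoC (sqrt x)).

Lemma tri_i x y z : tri x y z i = RtoC (sqrt x).
Proof. apply upd_same. Qed.

Lemma tri_j x y z : tri x y z j = RtoC (sqrt y).
Proof. unfold tri. rewrite upd_other by auto. apply upd_same. Qed.

Lemma tri_k x y z : tri x y z k = RtoC (sqrt z).
Proof. unfold tri. rewrite !upd_other by auto. apply upd_same. Qed.

Lemma tri_other x y z n : n <> i -> n <> j -> n <> k -> tri x y z n = v n.
Proof. intros. unfold tri. now rewrite !upd_other. Qed.

Lemma tri_allowed x y z : 0 <= x -> 0 <= y -> 0 <= z -> x + y + z = mass ->
  allowed_state (tri x y z).
Proof.
  intros Hx Hy Hz Hs. unfold allowed_state.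
  pose proof (is_series_upd _ i (RtoC (sqrt x)) _
    (is_series_upd _ j (RtoC (sqrt y)) _ (is_series_upd v k (RtoC (sqrt z)) 1 Hv))) as H.
  rewrite !upd_other, !Cmod_sqrt_sq in H by auto. fold (tri x y z) in H.
  match type of H with is_series _ ?l => replace l with 1 in H by (unfold mass in Hs; lra) end.
  exact H.
Qed.

(* Two states of the form tri agree at every world, except possibly at the
   two worlds involved in a merge. *)
Local Ltac tri_agree :=
  let c := fresh "c" in let Hca := fresh "Hca" in let Hcb := fresh "Hcb" in
  intros c Hca Hcb;
  destruct (Nat.eq_dec c i) as [->|?]; [try congruence; now rewrite !tri_i|];
  destruct (Nat.eq_dec c j) as [->|?]; [try congruence; now rewrite !tri_j|];
  destruct (Nat.eq_dec c k) as [->|?]; [try congruence; now rewrite !tri_k|];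
  now rewrite !tri_other.

Definition prob_i (t : R) : R := p (tri t (mass - t) 0) i.

Lemma prob_i_tri x y z : 0 <= x -> 0 <= y -> 0 <= z -> x + y + z = mass ->
  p (tri x y z) i = prob_i x.
Proof.
  intros Hx Hy Hz Hs.
  destruct (merge_worlds (tri x y z) (tri x (mass - x) 0) j k) as [_ [_ H]]; auto.
  - now apply tri_allowed.
  - rewrite !tri_j, tri_k, !Cmod_sqrt_sq by auto. do 2 f_equal. lra.
  - now rewrite tri_k, sqrt0_amplitude.
  - tri_agree.
  - symmetry. now apply H.
Qed.

(* Merging j into i: the joint probability of i and j is prob_i of their joint weight. *)
Lemma prob_ij_tri x y z : 0 <= x -> 0 <= y -> 0 <= z -> x + y + z = mass ->
  p (tri x y z) i + p (tri x y z) j = prob_i (x + y).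
Proof.
  intros Hx Hy Hz Hs.
  destruct (merge_worlds (tri x y z) (tri (x + y) 0 z) i j) as [_ [H _]]; auto.
  - now apply tri_allowed.
  - now rewrite !tri_i, tri_j, !Cmod_sqrt_sq.
  - now rewrite tri_j, sqrt0_amplitude.
  - tri_agree.
  - rewrite <- H. apply prob_i_tri; lra.
Qed.

Lemma prob_j_tri x y z : 0 <= x -> 0 <= y -> 0 <= z -> x + y + z = mass ->
  p (tri x y z) j = prob_i y.
Proof.
  intros Hx Hy Hz Hs.
  destruct (merge_worlds (tri x y z) (tri 0 y (z + x)) k i) as [Hw' [_ H]]; auto.
  - now apply tri_allowed.
  - now rewrite !tri_k, tri_i, !Cmod_sqrt_sq.
  - now rewrite tri_i, sqrt0_amplitude.
  - tri_agree.
  - rewrite <- H by auto.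
    pose proof (prob_ij_tri 0 y (z + x)) as Hsum. rewrite Rplus_0_l in Hsum.
    rewrite <- Hsum by lra. rewrite (HA2 _ Hw' i) by now rewrite tri_i, sqrt0_amplitude. ring.
Qed.

Lemma prob_i_additive x y : 0 <= x -> 0 <= y -> x + y <= mass ->
  prob_i x + prob_i y = prob_i (x + y).
Proof.
  intros Hx Hy Hxy.
  rewrite <- (prob_ij_tri x y (mass - x - y)), (prob_i_tri x y), (prob_j_tri x y) by lra.
  reflexivity.
Qed.

Lemma prob_i_nonneg x : 0 <= x -> x <= mass -> 0 <= prob_i x.
Proof.
  intros Hx Hxs. apply Hp, tri_allowed; lra.
Qed.

(* Transporting the weight of i (resp. j) to a reference state expresses the
   probabilities of v through prob_i. *)
Lemma prob_v_i : p v i = prob_i (Cmod (v i) ^ 2).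
Proof.
  rewrite <- (prob_j_tri 0 (Cmod (v i) ^ 2) (Cmod (v k) ^ 2 + Cmod (v j) ^ 2))
    by (unfold mass; nra).
  symmetry. apply (move_weight v _ i j k); auto.
  - now rewrite tri_i, sqrt0_amplitude.
  - apply tri_j.
  - apply tri_k.
  - intros. now apply tri_other.
Qed.

Lemma prob_v_j : p v j = prob_i (Cmod (v j) ^ 2).
Proof.
  rewrite <- (prob_i_tri (Cmod (v j) ^ 2) 0 (Cmod (v k) ^ 2 + Cmod (v i) ^ 2))
    by (unfold mass; nra).
  symmetry. apply (move_weight v _ j i k); auto.
  - now rewrite tri_j, sqrt0_amplitude.
  - apply tri_i.
  - apply tri_k.
  - intros. now apply tri_other.
Qed.

Lemma prob_ratio : p v i * Cmod (v j) ^ 2 = p v j * Cmod (v i) ^ 2.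
Proof.
  rewrite prob_v_i, prob_v_j. apply (additive_linear prob_i mass).
  - exact prob_i_additive.
  - exact prob_i_nonneg.
  - apply pow2_ge_0.
  - apply pow2_ge_0.
  - unfold mass. pose proof (pow2_ge_0 (Cmod (v k))). lra.
Qed.
End ThreeWorlds.
End ProbabilityRule.

Theorem theorem2 (p : vec -> nat -> R)
  (Hp : probability_rule p) (HA2 : axiom_A2 p) (HA3 : axiom_A3 p) :
  forall v : vec, allowed_state v -> forall n : nat, p v n = Cmod (v n) ^ 2.
Proof.
  intros v Hv n.
  (* p v n * |v j|^2 = p v j * |v n|^2 for every j, using a third world n + j + 1 *)
  assert (Hratio : forall j, p v n * Cmod (v j) ^ 2 = p v j * Cmod (v n) ^ 2).
  { intros j. destruct (Nat.eq_dec j n) as [->|Hjn]; [ring|].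
    apply (prob_ratio p HA2 HA3 Hp v n j (n + j + 1)); auto; lia. }
  (* summing over j, both sides are series of total p v n and |v n|^2 *)
  destruct (Hp v Hv) as [_ Hsum].
  pose proof (is_series_scal_r (p v n) _ _ Hv) as Hleft.
  pose proof (is_series_scal_r (Cmod (v n) ^ 2) _ _ Hsum) as Hright.
  apply (is_series_ext _ (fun j => p v j * Cmod (v n) ^ 2)) in Hleft;
    [|intros j; cbv beta; rewrite <- Hratio; apply Rmult_comm].
  pose proof (is_series_unique _ _ Hleft). pose proof (is_series_unique _ _ Hright). lra.
Qed.
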